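(* Let $R$ be a commutative Noetherian semiring and $I$ a $k$-ideal of $R$. If $I=\bigcap_{i=1}^n Q_i$ is a reduced primary decomposition of $I$ with $\sqrt{Q_i}=P_i$ for $i=1,\dots,n$, then $$\{P_1,\dots,P_n\}=\{P \text{ prime ideal of } R \mid \exists\, x\in R \text{ such that } P=\sqrt{(I:x)}\}.$$ In particular, the set $\{P_1,\dots,P_n\}$ is independent of the particular reduced primary decomposition chosen for $I$.
   Context: A semiring is a set $R$ with addition and multiplication such that $(R,+)$ is a commutative monoid with identity $0$, $(R,\cdot)$ is a monoid with identity $1$, multiplication distributes over addition on both sides, $0\cdot r=0=r\cdot 0$ for all $r$, and $1\neq 0$. $R$ is commutative if $(R,\cdot)$ is commutative. An ideal of $R$ is a nonempty subset closed under addition and under multiplication by arbitrary elements of $R$. $R$ is Noetherian if it satisfies the ascending chain condition on ideals. An ideal $I$ is a $k$-ideal if $x+y\in I$ and $x\in I$ imply $y\in I$. A proper ideal $P$ is prime if $ab\in P$ implies $a\in P$ or $b\in P$. The radical of an ideal $I$ is $\sqrt{I}=\{a\in R\mid a^n\in I \text{ for some } n\ge 1\}$. A proper ideal $Q$ is primary if $xy\in Q$ implies $x\in Q$ or $y\in\sqrt{Q}$. For $x\in R$, $(I:x)=\{r\in R\mid rx\in I\}$. A primary decomposition $I=\bigcap_{i=1}^n Q_i$ (each $Q_i$ primary, $P_i=\sqrt{Q_i}$) is reduced if the $P_i$ are pairwise distinct and $I$ is not the intersection of any proper subfamily of the $Q_i$. *)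

(* A commutative semiring with 1 <> 0 in which 0 is absorbing
   is exactly MathComp's comNzSemiRingType. Ideals are Prop-valued subsets. *)
From mathcomp Require Import all_boot all_algebra.
Set Implicit Arguments. Unset Strict Implicit. Unset Printing Implicit Defensive.
Import GRing.Theory.
Local Open Scope ring_scope.

Section SemiringIdeals.
Variable R : comNzSemiRingType.

Definition subsetR (A B : R -> Prop) := forall x, A x -> B x.
Definition eqsetR (A B : R -> Prop) := forall x, A x <-> B x.

Definition ideal (I : R -> Prop) : Prop :=
  (exists x, I x) /\
  (forall x y, I x -> I y -> I (x + y)) /\
  (forall r x, I x -> I (r * x)).

Definition proper (I : R -> Prop) : Prop := exists x, ~ I x.

Definition noetherian : Prop :=
  forall J : nat -> R -> Prop,
    (forall n, ideal (J n)) ->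
    (forall n, subsetR (J n) (J n.+1)) ->
    exists N, forall m, (N <= m)%N -> eqsetR (J m) (J N).

Definition k_ideal (I : R -> Prop) : Prop :=
  ideal I /\ forall x y, I (x + y) -> I x -> I y.

Definition prime_ideal (P : R -> Prop) : Prop :=
  ideal P /\ proper P /\ forall a b, P (a * b) -> P a \/ P b.

Definition radical (I : R -> Prop) : R -> Prop :=
  fun a => exists n, (1 <= n)%N /\ I (a ^+ n).

Definition primary_ideal (Q : R -> Prop) : Prop :=
  ideal Q /\ proper Q /\ forall x y, Q (x * y) -> Q x \/ radical Q y.

Definition colon (I : R -> Prop) (x : R) : R -> Prop := fun r => I (r * x).

Definition reduced_primary_decomposition (I : R -> Prop) (n : nat)
    (Q : 'I_n -> R -> Prop) : Prop :=
  (forall i, primary_ideal (Q i)) /\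
  eqsetR I (fun x => forall i, Q i x) /\
  (forall i j, eqsetR (radical (Q i)) (radical (Q j)) -> i = j) /\
  (forall S : {set 'I_n}, S != setT ->
      ~ eqsetR I (fun x => forall i, i \in S -> Q i x)).

End SemiringIdeals.

From Pilot Require Import Defs.
From mathcomp Require Import all_boot all_algebra.
From Stdlib Require Import Classical.
From mathcomp Require Import zify.

(* For each i, reducedness yields y lying in every Q_j (j <> i) but not in
   Q_i; then sqrt(I : y) = sqrt(Q_i : y) = P_i because Q_i is primary.
   Conversely sqrt(I : x) is the intersection of the sqrt(Q_i : x), each of
   which is either all of R (when x is in Q_i) or P_i; a prime equal to a
   finite intersection of ideals contains, hence equals, one of them. *)

Set Implicit Arguments. Unset Strict Implicit. Unset Printing Implicit Defensive.
Import GRing.Theory.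

Local Open Scope ring_scope.

Section SemiringIdealTheory.
Variable R : comNzSemiRingType.
Implicit Types (I Q P : R -> Prop) (a x y z : R).

Lemma ideal0 I : ideal I -> I 0.
Proof. by move=> [[y Iy] [_ IM]]; rewrite -(mul0r y); apply: IM. Qed.

Lemma idealD I x y : ideal I -> I x -> I y -> I (x + y).
Proof. by move=> [_ [ID _]]; apply: ID. Qed.

Lemma idealMl I x y : ideal I -> I y -> I (x * y).
Proof. by move=> [_ [_ IM]]; apply: IM. Qed.

Lemma idealMr I x y : ideal I -> I x -> I (x * y).
Proof. by move=> idI Ix; rewrite mulrC; apply: idealMl. Qed.

Lemma ideal_expr_leq I a m n : ideal I -> I (a ^+ m) -> (m <= n)%N -> I (a ^+ n).
Proof. by move=> idI Iam le_mn; rewrite -(subnK le_mn) exprD; apply: idealMl. Qed.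

Lemma ideal_eqset I J : eqsetR I J -> ideal I -> ideal J.
Proof.
move=> IJ [[y Iy] [ID IM]]; split; first by exists y; apply/IJ.
by split=> [u v /IJ Iu /IJ Iv | r u /IJ Iu]; apply/IJ; [apply: ID | apply: IM].
Qed.

Lemma prime_ideal_eqset P P' : eqsetR P P' -> prime_ideal P -> prime_ideal P'.
Proof.
move=> PP' [idP [[y Py] Pprime]]; split; first exact: ideal_eqset idP.
split; first by exists y => /PP'.
by move=> a b /PP' /Pprime [] /PP'; [left | right].
Qed.

Lemma proper_ideal_not1 I : ideal I -> Defs.proper I -> ~ I 1.
Proof. by move=> idI [y Iy] I1; apply: Iy; rewrite -(mulr1 y); apply: idealMl. Qed.

Lemma colon_ideal I x : ideal I -> ideal (colon I x).
Proof.
move=> idI; split; first by exists 0; rewrite /colon mul0r; apply: ideal0.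
split=> [u v Iux Ivx | r u Iux]; rewrite /colon.
  by rewrite mulrDl; apply: idealD.
by rewrite -mulrA; apply: idealMl.
Qed.

Lemma subset_radical I : subsetR I (radical I).
Proof. by move=> a Ia; exists 1%N; rewrite expr1. Qed.

Lemma radical_exprK I a n : (1 <= n)%N -> radical I (a ^+ n) -> radical I a.
Proof.
move=> n_gt0 [m [m_gt0 Ianm]]; exists (n * m)%N.
by rewrite muln_gt0 n_gt0 m_gt0 exprM.
Qed.

Lemma radical_eqset I J : eqsetR I J -> eqsetR (radical I) (radical J).
Proof. by move=> IJ a; split=> -[m [m_gt0 /IJ Iam]]; exists m. Qed.

(* Binomial expansion: each term of (x + y)^(m + n) has x^m or y^n as a factor. *)
Lemma radical_ideal I : ideal I -> ideal (radical I).
Proof.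
move=> idI; split; first by exists 0; apply: subset_radical; apply: ideal0.
split=> [x y [m [m_gt0 Ixm]] [n [n_gt0 Iyn]] | r x [m [m_gt0 Ixm]]].
- exists (m + n)%N; split; first by rewrite addn_gt0 m_gt0.
  rewrite exprDn; apply: (big_ind I); [exact: ideal0 | move=> u v; exact: idealD |].
  move=> i _; rewrite -mulr_natl; apply: idealMl => //.
  have [le_m_mni | lt_mni_m] := leqP m (m + n - i).
  + by apply: idealMr => //; exact: ideal_expr_leq idI Ixm le_m_mni.
  + apply: idealMl => //; apply: (ideal_expr_leq idI Iyn).
    by have := ltn_ord i; lia.
- by exists m; split=> //; rewrite exprMn; apply: idealMl.
Qed.

Lemma radical_primary_prime Q : primary_ideal Q -> prime_ideal (radical Q).
Proof.
move=> [idQ [Qproper Qprimary]]; split; first exact: radical_ideal.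
split.
  by exists 1 => -[n [_]]; rewrite expr1n; apply: proper_ideal_not1.
move=> a b [n [n_gt0]]; rewrite exprMn => /Qprimary [Qan | /radical_exprK rad_b].
  by left; exists n.
by right; apply: rad_b.
Qed.

Lemma radical_colon_full Q y : ideal Q -> Q y -> forall z, radical (colon Q y) z.
Proof. by move=> idQ Qy z; apply: subset_radical; apply: idealMl. Qed.

Lemma radical_colon_primary Q y :
  primary_ideal Q -> ~ Q y -> eqsetR (radical (colon Q y)) (radical Q).
Proof.
move=> [idQ [_ Qprimary]] Qy z; split=> -[m [m_gt0 Qzm]].
  move: Qzm; rewrite /colon mulrC => /Qprimary [// | rad_zm].
  exact: radical_exprK rad_zm.
by exists m; split=> //; apply: idealMr.
Qed.

Lemma radical_bigcap (T : finType) (F : T -> R -> Prop) :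
  (forall i, ideal (F i)) ->
  eqsetR (radical (fun a => forall i, F i a)) (fun a => forall i, radical (F i) a).
Proof.
move=> idF a; split=> [[m [m_gt0 Fam]] i | rad_a]; first by exists m.
have [m Fam] := fin_all_exists rad_a.
exists (\max_i m i).+1; split=> // i.
have [_ Fami] := Fam i.
by apply: (ideal_expr_leq (idF i) Fami); apply: leq_trans (leq_bigmax i) _.
Qed.

Lemma prime_ideal_subset_or_avoid_seq (T : eqType) P (F : T -> R -> Prop) (s : seq T) :
  prime_ideal P -> (forall i, ideal (F i)) ->
  (exists2 i, i \in s & subsetR (F i) P) \/
  (exists a, ~ P a /\ forall i, i \in s -> F i a).
Proof.
move=> [idP [Pproper Pprime]] idF; elim: s => [|i s IHs].
  by right; exists 1; split=> //; apply: proper_ideal_not1.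
case: IHs => [[j sj FjP] | [a [Pa Fsa]]].
  by left; exists j => //; rewrite inE sj orbT.
case: (classic (subsetR (F i) P)) => [FiP | notFiP].
  by left; exists i => //; rewrite inE eqxx.
have [b notFPb] := not_all_ex_not _ _ notFiP.
have [Fib Pb] := imply_to_and _ _ notFPb.
right; exists (b * a); split; first by case/Pprime.
move=> j; rewrite inE => /orP [/eqP -> | sj].
  exact: idealMr.
exact: idealMl (idF j) (Fsa j sj).
Qed.

Lemma prime_ideal_bigcap_subset (T : finType) P (F : T -> R -> Prop) :
  prime_ideal P -> (forall i, ideal (F i)) ->
  subsetR (fun a => forall i, F i a) P -> exists i, subsetR (F i) P.
Proof.
move=> Pprime idF capF_P.
have [[i _ FiP] | [a [Pa Fa]]] := prime_ideal_subset_or_avoid_seq (index_enum T) Pprime idF.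
  by exists i.
by case: Pa; apply: capF_P => i; apply: Fa; rewrite mem_index_enum.
Qed.

Lemma reduced_primary_decomposition_witness I n (Q : 'I_n -> R -> Prop) :
  reduced_primary_decomposition I Q ->
  forall i, exists y, ~ Q i y /\ forall j, j != i -> Q j y.
Proof.
move=> [_ [IQ [_ Qmin]]] i; apply: NNPP => no_witness.
have notT : [set j | j != i] != setT.
  by apply/negP => /eqP allj; have := in_setT i; rewrite -allj inE eqxx.
apply: (Qmin _ notT) => x; split=> [/IQ Qx j _ | Qjx]; first exact: Qx.
apply/IQ => j; have [-> | ji] := eqVneq j i; last by apply: Qjx; rewrite inE.
apply: NNPP => Qix; apply: no_witness; exists x; split=> // k ki.
by apply: Qjx; rewrite inE.
Qed.

End SemiringIdealTheory.

Theorem theorem2p13 (R : comNzSemiRingType) (I : R -> Prop) (n : nat)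
    (Q : 'I_n -> R -> Prop) :
  noetherian R -> k_ideal I -> reduced_primary_decomposition I Q ->
  forall P : R -> Prop,
    (exists i : 'I_n, eqsetR P (radical (Q i))) <->
    (prime_ideal P /\ exists x : R, eqsetR P (radical (colon I x))).
Proof.
move=> _ _ decQ P; have [Qprimary [IQ _]] := decQ.
have idQ i : ideal (Q i) := (Qprimary i).1.
have radI x : eqsetR (radical (colon I x)) (fun z => forall i, radical (colon (Q i) x) z).
  move=> z; apply: iff_trans (radical_eqset (fun a => IQ (a * x)) z) _.
  exact: radical_bigcap (fun i => colon_ideal x (idQ i)) z.
split=> [[i PQi] | [Pprime [x PIx]]].
  have [y [Qiy Qjy]] := reduced_primary_decomposition_witness decQ i.
  split.
    apply: prime_ideal_eqset (fun z => iff_sym (PQi z)) _.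
    exact: radical_primary_prime (Qprimary i).
  exists y => z; split=> [/PQi /(radical_colon_primary (Qprimary i) Qiy) rad_z
                         | /radI /(_ i)].
    apply/radI => j; have [-> // | ji] := eqVneq j i.
    exact: radical_colon_full (Qjy j ji) _.
  by move/(radical_colon_primary (Qprimary i) Qiy)/PQi.
have idF i : ideal (radical (colon (Q i) x)) by apply/radical_ideal/colon_ideal.
have [i FiP] : exists i, subsetR (radical (colon (Q i) x)) P.
  by apply: prime_ideal_bigcap_subset idF _ => // z /radI /PIx.
exists i; have [Qix | Qix] := classic (Q i x).
  by case: (proper_ideal_not1 Pprime.1 Pprime.2.1); apply/FiP/radical_colon_full.
move=> z; rewrite -(radical_colon_primary (Qprimary i) Qix).
by split=> [/PIx /radI | /FiP].
Qed.
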